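(* Let $n\ge 1$, let $\Gamma\in G_n$, and let $M_\Gamma\in M_{n+1,n}(\mathbb{N})$ be its multiplicity matrix. If $\mathrm{rank}(M_\Gamma)=n$, then $\Gamma$ has a minimal reduction, i.e. there is a subgraph $\gamma$ of $\Gamma$, obtained from $\Gamma$ by deleting edges only, such that $\gamma\in G_n$ and $\gamma$ has exactly $n+1$ edges.
   Context: For $n\ge 1$, $G_n$ denotes the set of finite (multi)graphs with $2n+1$ vertices, $n$ of them in ''level 1'' and $n+1$ in ''level 2'', such that (I) every edge joins a level-1 vertex to a level-2 vertex (no edges within a level; multiple edges allowed), and (II) every vertex is incident to at least one edge. Ordering the level-1 vertices $1,\dots,n$ and level-2 vertices $1,\dots,n+1$, the multiplicity matrix $M_\Gamma$ has $(i,j)$ entry equal to the number of edges joining level-2 vertex $i$ and level-1 vertex $j$. Rank is over $\mathbb{Q}$ (equivalently $\mathbb{C}$). *)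

From mathcomp Require Import all_boot all_order all_algebra.
Set Implicit Arguments. Unset Strict Implicit. Unset Printing Implicit Defensive.
Import GRing.Theory Num.Theory.

(* A graph Gamma in G_n is represented by its multiplicity matrix
   M : 'M[nat]_(n.+1, n): M i j = number of edges between level-2 vertex i
   and level-1 vertex j.  Condition (I) is built into this representation
   (edges only between levels); condition (II) says every row and every
   column of M has a nonzero entry. *)
Definition in_G (n : nat) (M : 'M[nat]_(n.+1, n)) : Prop :=
  (forall i : 'I_n.+1, exists j : 'I_n, 0 < M i j)%N /\
  (forall j : 'I_n, exists i : 'I_n.+1, 0 < M i j)%N.

Definition edge_subgraph (n : nat) (N M : 'M[nat]_(n.+1, n)) : Prop :=
  forall i j, (N i j <= M i j)%N.

Definition num_edges (n : nat) (M : 'M[nat]_(n.+1, n)) : nat :=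
  (\sum_(i < n.+1) \sum_(j < n) M i j)%N.

Definition rankQ (n : nat) (M : 'M[nat]_(n.+1, n)) : nat :=
  \rank (map_mx (fun k : nat => (k%:R : rat)) M).

From mathcomp Require Import all_boot all_order all_algebra.
From mathcomp Require Import all_fingroup.
Set Implicit Arguments. Unset Strict Implicit. Unset Printing Implicit Defensive.
Import GRing.Theory Num.Theory.
Local Open Scope ring_scope.

(* Rank n gives a nonzero maximal minor; a nonzero term of its Leibniz
   expansion is a matching g of the n level-1 vertices into the level-2
   vertices along edges of Gamma.  Keep the n matching edges and, at the one
   level-2 vertex missed by g, one further edge of Gamma: this gives n + 1
   edges and no isolated vertex. *)

Lemma det_neq0_perm (R : comPzRingType) (k : nat) (A : 'M[R]_k) :
  \det A != 0 -> exists s : 'S_k, forall i, A i (s i) != 0.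
Proof.
rewrite /determinant => detA.
have [s /= As] : exists s : 'S_k, \prod_i A i (s i) != 0.
  apply/existsP; apply: contraR detA; rewrite negb_exists => /forallP As0.
  by apply/eqP/big1 => s _; move/negPn/eqP: (As0 s) => ->; rewrite mulr0.
exists s => i; apply: contra As => /eqP Ai0.
by rewrite (bigD1 i) //= Ai0 mul0r.
Qed.

Lemma rank_col_matching (F : fieldType) (m k : nat) (A : 'M[F]_(m, k)) :
  \rank A = k -> exists g : 'I_k -> 'I_m, injective g /\ forall j, A (g j) j != 0.
Proof.
move=> rkA.
(* The type 'I_m ^ \rank A of maxrankfun A mentions the rank, so generalize it before substituting k. *)
have := maxrowsub_free A; have := @maxrankfun_inj _ _ _ A.
move: (maxrankfun A) rkA; move: (\rank A) => r f rk_k.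
subst r => f_inj /eqP rk_sub.
have subA_unit : rowsub f A \in unitmx by rewrite -row_free_unit /row_free rk_sub.
rewrite unitmxE unitfE in subA_unit.
have [s As] := det_neq0_perm subA_unit.
exists (fun j => f (s^-1 j)%g); split; first by move=> a b /f_inj /perm_inj.
by move=> j; have := As (s^-1 j)%g; rewrite permKV mxE.
Qed.

Lemma rankQ_matching (n : nat) (M : 'M[nat]_(n.+1, n)) : rankQ M = n ->
  exists g : 'I_n -> 'I_n.+1, injective g /\ forall j, (0 < M (g j) j)%N.
Proof.
move=> /rank_col_matching [g [g_inj Mg]]; exists g; split => // j.
by have := Mg j; rewrite mxE pnatr_eq0 lt0n.
Qed.

Lemma sum_eq_indicator (I J : finType) (f : J -> I) :
  (\sum_(i : I) \sum_(j : J) (f j == i) = #|J|)%N.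
Proof.
rewrite exchange_big -sum1_card; apply: eq_bigr => j _.
by rewrite (bigD1 (f j)) //= eqxx big1 // => i /negbTE; rewrite eq_sym => ->.
Qed.

Lemma sum_graph_on (I J : finType) (P : pred I) (h : I -> J) :
  (\sum_(i : I) \sum_(j : J) (P i && (j == h i)) = #|P|)%N.
Proof.
rewrite -sum1_card [in RHS]big_mkcond; apply: eq_bigr => i _.
rewrite unfold_in; case: (P i) => /=; last by rewrite big1.
by rewrite (bigD1 (h i)) //= eqxx big1 // => j /negbTE ->.
Qed.

Lemma card_predC_codom_inj (n : nat) (g : 'I_n -> 'I_n.+1) :
  injective g -> #|[predC codom g]| = 1%N.
Proof.
move=> g_inj; have := cardC (mem (codom g)).
by rewrite card_codom // !card_ord => e; rewrite -(addKn n #|_|) e subSnn.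
Qed.

Section MinimalReduction.

Variables (n : nat) (g : 'I_n -> 'I_n.+1) (h : 'I_n.+1 -> 'I_n).

Definition reduction_mx : 'M[nat]_(n.+1, n) :=
  \matrix_(i, j) ((g j == i) + ((i \notin codom g) && (j == h i)))%N.

Lemma reduction_mx_in_G : in_G reduction_mx.
Proof.
split=> [i | j]; last by exists (g j); rewrite mxE eqxx.
have [/codomP [j ->] | gi] := boolP (i \in codom g).
  by exists j; rewrite mxE eqxx.
by exists (h i); rewrite mxE gi eqxx addn1.
Qed.

Lemma num_edges_reduction_mx : injective g -> num_edges reduction_mx = n.+1.
Proof.
move=> g_inj; rewrite /num_edges.
under eq_bigr => i _ do under eq_bigr => j _ do rewrite mxE.
under eq_bigr => i _ do rewrite big_split /=.
rewrite big_split /= sum_eq_indicator sum_graph_on.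
by rewrite card_predC_codom_inj // card_ord addn1.
Qed.

Lemma reduction_mx_sub (M : 'M[nat]_(n.+1, n)) :
  (forall j, 0 < M (g j) j)%N -> (forall i, 0 < M i (h i))%N ->
  edge_subgraph reduction_mx M.
Proof.
move=> Mg Mh i j; rewrite mxE.
have [<- | _] := eqVneq (g j) i; first by rewrite codom_f addn0.
by case: (i \notin codom g); case: eqP => // ->.
Qed.

End MinimalReduction.

Theorem theorem3p1 (n : nat) (M : 'M[nat]_(n.+1, n)) :
  (1 <= n)%N -> in_G M -> rankQ M = n ->
  exists N : 'M[nat]_(n.+1, n),
    edge_subgraph N M /\ in_G N /\ num_edges N = n.+1.
Proof.
move=> _ [M_rows _] /rankQ_matching [g [g_inj Mg]].
have [h Mh] := fin_all_exists M_rows.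
exists (reduction_mx g h); split; first exact: reduction_mx_sub.
by split; [exact: reduction_mx_in_G | exact: num_edges_reduction_mx].
Qed.
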